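(* Let $\mathcal{D}=(\mathcal{P},\mathcal{B},\mathcal{I})$ be a $(v,b,r,k,\lambda_1,0)$ SPBIBD of type $(k-1,t)$ with $0<t<k$, and let $\Gamma$ be its incidence graph. Then every vertex $p\in\mathcal{P}$ is distance-regularized. Moreover, $\Gamma$ is distance-semiregular with respect to $\mathcal{P}$ with intersection numbers $c_0=0,\ c_1=1,\ c_2=\lambda_1,\ c_3=t,\ c_4=r$; $b_0=r,\ b_1=k-1,\ b_2=r-\lambda_1,\ b_3=k-t,\ b_4=0$.
   Context: A design $\mathcal{D}=(\mathcal{P},\mathcal{B},\mathcal{I})$ is an incidence structure with $|\mathcal{P}|=v$, $|\mathcal{B}|=b$, every block incident with exactly $k$ points and every point with exactly $r$ blocks; standing assumptions: $v>k$ and $r<b$. $(p,B)$ is a flag if $p\in B$, a non-flag otherwise. $\mathcal{D}$ is a $(v,b,r,k,\lambda_1,\lambda_2)$ SPBIBD of type $(s,t)$ if (i) any two distinct points are together in exactly $\lambda_1$ or exactly $\lambda_2$ blocks; (ii) for every flag $(p,B)$, the number of points of $B$ other than $p$ lying with $p$ in exactly $\lambda_1$ blocks is $s$; (iii) for every non-flag $(p,B)$, the number of points of $B$ lying with $p$ in exactly $\lambda_1$ blocks is $t$. The incidence graph is the bipartite graph on $\mathcal{P}\cup\mathcal{B}$ with $p\sim B$ iff $p\in B$. For a connected graph, $\Gamma_i(u)$ is the set of vertices at distance $i$ from $u$, $\Gamma(u)=\Gamma_1(u)$, $\varepsilon(u)$ the eccentricity. For $w\in\Gamma_i(u)$, $b_i(u,w)=|\Gamma_{i+1}(u)\cap\Gamma(w)|$,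 $c_i(u,w)=|\Gamma_{i-1}(u)\cap\Gamma(w)|$, $a_i(u,w)=|\Gamma_i(u)\cap\Gamma(w)|$. $u$ is distance-regularized if for each $0\le i\le\varepsilon(u)$ these do not depend on $w\in\Gamma_i(u)$. A connected $(Y,Y')$-bipartite graph is distance-semiregular with respect to $Y$ if every vertex of $Y$ is distance-regularized with the same numbers $b_i, c_i$ (i.e. $b_i(x,w)=b_i$, $c_i(x,w)=c_i$ for all $x\in Y$, $w\in\Gamma_i(x)$). *)

From mathcomp Require Import all_boot.
Set Implicit Arguments.
Unset Strict Implicit.
Unset Printing Implicit Defensive.

Section Designs.
Variables (P B : finType) (I : P -> B -> bool).

Definition is_design (v b r k : nat) : Prop :=
  #|P| = v /\ #|B| = b /\
  (forall bl : B, #|[set p | I p bl]| = k) /\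
  (forall p : P, #|[set bl | I p bl]| = r) /\
  k < v /\ r < b.

Definition lam (p q : P) : nat := #|[set bl | I p bl && I q bl]|.

Definition is_SPBIBD (v b r k l1 l2 s t : nat) : Prop :=
  [/\ is_design v b r k,
      (forall p q : P, p != q -> lam p q = l1 \/ lam p q = l2),
      (forall (p : P) (bl : B), I p bl ->
         #|[set q | (q != p) && I q bl && (lam p q == l1)]| = s) &
      (forall (p : P) (bl : B), ~~ I p bl ->
         #|[set q | I q bl && (lam p q == l1)]| = t)].
End Designs.

Definition inc_adj (P B : finType) (I : P -> B -> bool) : rel (P + B)%type :=
  fun x y => match x, y with
             | inl p, inr bl => I p bl
             | inr bl, inl p => I p bl
             | _, _ => false
             end.

Section Graphs.
Variables (V : finType) (adj : rel V).

Definition nbr (w : V) : {set V} := [set y | adj w y].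

Fixpoint ball (u : V) (n : nat) : {set V} :=
  match n with
  | 0 => [set u]
  | n'.+1 => ball u n' :|: [set y | [exists x in ball u n', adj x y]]
  end.

Definition sphere (u : V) (i : nat) : {set V} :=
  [set w | (w \in ball u i) && ((i == 0) || (w \notin ball u i.-1))].

Definition connected_graph : Prop := forall u w : V, exists n, w \in ball u n.

Definition bnum (u : V) (i : nat) (w : V) : nat := #|sphere u i.+1 :&: nbr w|.
Definition cnum (u : V) (i : nat) (w : V) : nat :=
  if i is 0 then 0 else #|sphere u i.-1 :&: nbr w|.
Definition anum (u : V) (i : nat) (w : V) : nat := #|sphere u i :&: nbr w|.

(* u is distance-regularized (condition vacuous for i > eccentricity) *)
Definition distance_regularized (u : V) : Prop :=
  forall i (w w' : V), w \in sphere u i -> w' \in sphere u i ->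
    [/\ bnum u i w = bnum u i w', cnum u i w = cnum u i w' &
        anum u i w = anum u i w'].

(* distance-semiregular w.r.t. Y with intersection numbers
   bs = [b_0; ...; b_d], cs = [c_0; ...; c_d]: every x in Y has
   eccentricity <= d and b_i(x,w) = b_i, c_i(x,w) = c_i. *)
Definition distance_semiregular (Y : {set V}) (bs cs : seq nat) : Prop :=
  [/\ connected_graph,
      (forall x, x \in Y -> distance_regularized x) &
      (forall x, x \in Y -> forall i (w : V), w \in sphere x i ->
         [/\ i < size bs, bnum x i w = nth 0 bs i & cnum x i w = nth 0 cs i])].
End Graphs.

From mathcomp Require Import all_boot.

Set Implicit Arguments.
Unset Strict Implicit.
Unset Printing Implicit Defensive.

(* With lambda_2 = 0, two points on a common block are lambda_1-related, and
   lambda_1 > 0 because s = k - 1 > 0.  Hence, seen from a point p, the blocks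
   through p are at distance 1, the points lambda_1-related to p at distance 2,
   the other blocks at distance 3 (t > 0 gives each of them a point at distance
   2) and the remaining points at distance 4.  With this explicit distance the
   intersection numbers are read off from r, k, lambda_1 and the type (k - 1, t). *)

Section DistanceFunction.
Variables (V : finType) (adj : rel V) (u : V) (d : V -> nat).
Hypothesis d_eq0 : forall w, (d w == 0) = (w == u).
Hypothesis d_adj : forall x y, adj x y -> d y <= (d x).+1.
Hypothesis d_pred : forall w, 0 < d w -> exists2 x, adj x w & d x = (d w).-1.

Lemma ball_eq_dist_le n : ball adj u n = [set w | d w <= n].
Proof.
elim: n => [|n IHn] /=; apply/setP=> w; first by rewrite !inE leqn0 d_eq0.
rewrite IHn !inE; apply/idP/idP.
- case/orP=> [/leqW //|/existsP[x /andP[]]].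
  by rewrite inE => dx /d_adj/leq_trans->.
- rewrite leq_eqVlt ltnS => /orP[/eqP dw|->//].
  have [|x xw dx] := d_pred (w := w); first by rewrite dw.
  by apply/orP; right; apply/existsP; exists x; rewrite inE dx dw leqnn.
Qed.

Lemma sphere_eq_dist i : sphere adj u i = [set w | d w == i].
Proof.
apply/setP=> w; rewrite /sphere !inE !ball_eq_dist_le !inE.
by case: i => [|i] /=; rewrite ?leqn0 ?andbT // eqn_leq -ltnNge.
Qed.
End DistanceFunction.

Lemma ball_trans (V : finType) (adj : rel V) u x w m n :
  x \in ball adj u m -> w \in ball adj x n -> w \in ball adj u (m + n).
Proof.
move=> ux; elim: n w => [|n IHn] w /=; first by rewrite addn0 inE => /eqP->.
rewrite addnS /= !inE => /orP[/IHn->//|/existsP[y /andP[xy yw]]].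
by apply/orP; right; apply/existsP; exists y; rewrite IHn.
Qed.

Lemma card_set_andN (T : finType) (a c : pred T) :
  #|[set x | a x & ~~ c x]| = #|[set x | a x]| - #|[set x | a x & c x]|.
Proof.
have -> : [set x | a x & ~~ c x] = [set x | a x] :\: [set x | c x].
  by apply/setP=> x; rewrite !inE andbC.
by rewrite cardsD; congr (_ - _); apply: eq_card => x; rewrite !inE.
Qed.

Section IncidenceGraph.
Variables (P B : finType) (I : P -> B -> bool).
Local Notation adj := (inc_adj I).

Lemma card_nbr_point (S : {set P + B}) q :
  #|S :&: nbr adj (inl q)| = #|[set bl | I q bl & inr bl \in S]|.
Proof.
rewrite -(card_imset _ (@inr_inj P B)).
apply: eq_card => -[q'|bl]; rewrite !inE /=.
  by rewrite andbF; apply/esym/imsetP => -[].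
by rewrite (mem_imset _ _ inr_inj) inE andbC.
Qed.

Lemma card_nbr_block (S : {set P + B}) bl :
  #|S :&: nbr adj (inr bl)| = #|[set q | I q bl & inl q \in S]|.
Proof.
rewrite -(card_imset _ (@inl_inj P B)).
apply: eq_card => -[q|bl']; rewrite !inE /=.
  by rewrite (mem_imset _ _ inl_inj) inE andbC.
by rewrite andbF; apply/esym/imsetP => -[].
Qed.

Lemma lam_gt0 p q bl : I p bl -> I q bl -> 0 < lam I p q.
Proof. by move=> pbl qbl; apply/card_gt0P; exists bl; rewrite inE pbl qbl. Qed.

Lemma lam_eq0_off_block p q bl : lam I p q = 0 -> I q bl -> ~~ I p bl.
Proof. by move=> lam0 qbl; apply/negP => /lam_gt0/(_ qbl); rewrite lam0. Qed.

Lemma card_blocks_not_through p q :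
  #|[set bl | I q bl & ~~ I p bl]| = #|[set bl | I q bl]| - lam I p q.
Proof.
rewrite card_set_andN; congr (_ - _).
by apply: eq_card => bl; rewrite !inE andbC.
Qed.

(* The graph distance from [inl p] when [lam] takes only the values [l1 > 0]
   and [0]; see [sphere_point_dist]. *)
Definition point_dist (p : P) (x : P + B) : nat :=
  match x with
  | inl q => if q == p then 0 else if lam I p q == 0 then 4 else 2
  | inr bl => if I p bl then 1 else 3
  end.

Lemma point_dist_le4 p x : point_dist p x <= 4.
Proof. by case: x => [q|bl] /=; repeat case: ifP. Qed.

Lemma point_dist_eq0 p x : (point_dist p x == 0) = (x == inl p).
Proof.
case: x => [q|bl] /=; last by case: ifP.
by rewrite (inj_eq inl_inj); case: (eqVneq q p) => // _; case: ifP.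
Qed.

Lemma point_dist_adj p x y : adj x y -> point_dist p y <= (point_dist p x).+1.
Proof.
case: x y => [q|bl] [q'|bl'] //= xy.
  case: (eqVneq q p) => [<-|_]; first by rewrite xy.
  by case: ifP; case: ifP.
case pbl: (I p bl); last by repeat case: ifP.
by case: (eqVneq q' p) => // _; rewrite (negbTE (lt0n_neq0 (lam_gt0 pbl xy))).
Qed.

Lemma odd_point_dist p x :
  odd (point_dist p x) = (if x is inr _ then true else false).
Proof. by case: x => [q|bl] /=; repeat case: ifP. Qed.

Lemma point_dist_adj_neq p x y : adj x y -> point_dist p x != point_dist p y.
Proof.
move=> xy; apply/negP => /eqP/(congr1 odd).
by rewrite !odd_point_dist; case: x y xy => [?|?] [?|?].
Qed.

Lemma point_dist_on_block p q bl : I p bl -> I q bl ->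
  point_dist p (inl q) = if q == p then 0 else 2.
Proof.
by move=> pbl qbl /=; rewrite (negbTE (lt0n_neq0 (lam_gt0 pbl qbl))).
Qed.

End IncidenceGraph.

Section SPBIBD.
Variables (P B : finType) (I : P -> B -> bool) (v b r k l1 t : nat).
Hypothesis spbibd : is_SPBIBD I v b r k l1 0 (k - 1) t.
Hypothesis t_gt0 : 0 < t.
Hypothesis t_lt_k : t < k.
Local Notation adj := (inc_adj I).
Local Notation dist := (point_dist I).

Lemma block_size bl : #|[set p | I p bl]| = k.
Proof. by case: spbibd => -[_ [_ []]]. Qed.

Lemma point_degree p : #|[set bl | I p bl]| = r.
Proof. by case: spbibd => -[_ [_ [_ []]]]. Qed.

Lemma lam_l1_or_0 p q : p != q -> lam I p q = l1 \/ lam I p q = 0.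
Proof. by case: spbibd => _ lamE _ _; apply: lamE. Qed.

Lemma card_flag_l1 p bl : I p bl ->
  #|[set q | (q != p) && I q bl && (lam I p q == l1)]| = k - 1.
Proof. by case: spbibd => _ _ flagE _; apply: flagE. Qed.

Lemma card_nonflag_l1 p bl : ~~ I p bl ->
  #|[set q | I q bl && (lam I p q == l1)]| = t.
Proof. by case: spbibd => _ _ _ nonflagE; apply: nonflagE. Qed.

Lemma exists_point_on bl : exists p, I p bl.
Proof.
have : 0 < #|[set p | I p bl]| by rewrite block_size (leq_ltn_trans _ t_lt_k).
by case/card_gt0P => p; rewrite inE; exists p.
Qed.

Lemma exists_flag : exists p bl, I p bl.
Proof.
have [_ [cardB [_ [_ [_ r_lt_b]]]]] : is_design I v b r k by case: spbibd.
have /card_gt0P[bl _] : 0 < #|B| by rewrite cardB (leq_ltn_trans _ r_lt_b).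
by have [p pbl] := exists_point_on bl; exists p, bl.
Qed.

Lemma r_gt0 : 0 < r.
Proof.
have [p [bl pbl]] := exists_flag.
by rewrite -(point_degree p); apply/card_gt0P; exists bl; rewrite inE.
Qed.

Lemma l1_gt0 : 0 < l1.
Proof.
have [p [bl pbl]] := exists_flag.
have : 0 < #|[set q | (q != p) && I q bl && (lam I p q == l1)]|.
  by rewrite (card_flag_l1 pbl) subn_gt0 (leq_ltn_trans _ t_lt_k).
case/card_gt0P => q; rewrite inE => /andP[/andP[_ qbl] /eqP<-].
exact: lam_gt0 qbl.
Qed.

Lemma lam_eq_l1 p q : q != p -> (lam I p q == l1) = (lam I p q != 0).
Proof.
have l1_neq0 := lt0n_neq0 l1_gt0.
rewrite eq_sym => pq; have [->|->] := lam_l1_or_0 pq; first by rewrite eqxx l1_neq0.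
by rewrite eqxx eq_sym (negbTE l1_neq0).
Qed.

Lemma point_dist_off_block p q bl : ~~ I p bl -> I q bl ->
  dist p (inl q) = if lam I p q == l1 then 2 else 4.
Proof.
move=> pbl qbl; have qp : q != p by apply: contraNneq pbl => <-.
by rewrite /= (negbTE qp) (lam_eq_l1 qp); case: ifP.
Qed.

Lemma point_dist_pred p w :
  0 < dist p w -> exists2 x, adj x w & dist p x = (dist p w).-1.
Proof.
case: w => [q|bl] /=.
  case: eqVneq => // qp _; case: ifPn => [/eqP lam0|lam_neq0].
    have /card_gt0P[bl] : 0 < #|[set bl | I q bl]| by rewrite point_degree r_gt0.
    rewrite inE => qbl; exists (inr bl) => //=.
    by rewrite (negbTE (lam_eq0_off_block lam0 qbl)).
  have /card_gt0P[bl] : 0 < lam I p q by rewrite lt0n.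
  by rewrite inE => /andP[pbl qbl]; exists (inr bl); rewrite //= pbl.
case: ifPn => [pbl|pbl] _; first by exists (inl p); rewrite //= eqxx.
have /card_gt0P[q] : 0 < #|[set q | I q bl && (lam I p q == l1)]|.
  by rewrite card_nonflag_l1.
rewrite inE => /andP[qbl l1q].
by exists (inl q); rewrite // (point_dist_off_block pbl qbl) l1q.
Qed.

Lemma sphere_point_dist p i : sphere adj (inl p) i = [set w | dist p w == i].
Proof.
apply: sphere_eq_dist;
  [exact: point_dist_eq0 | exact: point_dist_adj | exact: point_dist_pred].
Qed.

Lemma ball_point_dist p n : ball adj (inl p) n = [set w | dist p w <= n].
Proof.
apply: ball_eq_dist_le;
  [exact: point_dist_eq0 | exact: point_dist_adj | exact: point_dist_pred].
Qed.

Lemma anum_eq0 p i w : w \in sphere adj (inl p) i -> anum adj (inl p) i w = 0.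
Proof.
rewrite /anum sphere_point_dist inE => /eqP<-; apply/eqP; rewrite cards_eq0.
apply/eqP/setP => y; rewrite !inE; apply/andP => -[/eqP dy /(point_dist_adj_neq p)].
by rewrite dy eqxx.
Qed.

Lemma bnum_base p : bnum adj (inl p) 0 (inl p) = r.
Proof.
rewrite /bnum sphere_point_dist card_nbr_point -(point_degree p).
by apply: eq_card => bl; rewrite !inE /=; case: (I p bl).
Qed.

Lemma bnum_cnum_flag p bl : I p bl ->
  bnum adj (inl p) 1 (inr bl) = k - 1 /\ cnum adj (inl p) 1 (inr bl) = 1.
Proof.
move=> pbl; rewrite /bnum /cnum !sphere_point_dist !card_nbr_block.
split.
  rewrite -(block_size bl) [in RHS](cardsD1 p) inE pbl addKn.
  apply: eq_card => q; rewrite !inE.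
  case qbl: (I q bl); rewrite ?andbF // (point_dist_on_block pbl qbl).
  by case: (eqVneq q p).
rewrite -[RHS](cards1 p); apply: eq_card => q; rewrite !inE.
rewrite -[1.-1]/0 point_dist_eq0 (inj_eq inl_inj).
by case: (eqVneq q p) => [->|]; rewrite ?pbl ?andbF.
Qed.

Lemma bnum_cnum_collinear p q : q != p -> lam I p q != 0 ->
  bnum adj (inl p) 2 (inl q) = r - l1 /\ cnum adj (inl p) 2 (inl q) = l1.
Proof.
move=> qp lam_neq0; have /eqP lamE : lam I p q == l1 by rewrite lam_eq_l1.
rewrite /bnum /cnum !sphere_point_dist !card_nbr_point -lamE.
split; first rewrite -(point_degree q) -card_blocks_not_through;
  by apply: eq_card => bl; rewrite !inE /=; case: (I p bl); rewrite ?andbF ?andbT.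
Qed.

Lemma bnum_cnum_nonflag p bl : ~~ I p bl ->
  bnum adj (inl p) 3 (inr bl) = k - t /\ cnum adj (inl p) 3 (inr bl) = t.
Proof.
move=> pbl; rewrite /bnum /cnum !sphere_point_dist !card_nbr_block.
rewrite -(block_size bl) -(card_nonflag_l1 pbl) -card_set_andN.
split; apply: eq_card => q; rewrite !inE;
  by case qbl: (I q bl); rewrite ?andbF // (point_dist_off_block pbl qbl); case: ifP.
Qed.

Lemma bnum_cnum_noncollinear p q : lam I p q = 0 ->
  bnum adj (inl p) 4 (inl q) = 0 /\ cnum adj (inl p) 4 (inl q) = r.
Proof.
move=> lam0; rewrite /bnum /cnum !sphere_point_dist !card_nbr_point.
split.
  apply: eq_card0 => bl; rewrite !inE /=.
  by apply/negbTE; rewrite negb_and; case: ifP; rewrite orbT.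
rewrite -(point_degree q); apply: eq_card => bl; rewrite !inE /=.
by case qbl: (I q bl); rewrite ?(negbTE (lam_eq0_off_block lam0 qbl)).
Qed.

Lemma intersection_numbers p i w : w \in sphere adj (inl p) i ->
  [/\ i < 5, bnum adj (inl p) i w = nth 0 [:: r; k - 1; r - l1; k - t; 0] i,
      cnum adj (inl p) i w = nth 0 [:: 0; 1; l1; t; r] i &
      anum adj (inl p) i w = 0].
Proof.
move=> wi; rewrite (anum_eq0 wi); move: wi; rewrite sphere_point_dist inE => /eqP<-.
rewrite ltnS point_dist_le4; case: w => [q|bl] /=.
  case: (eqVneq q p) => [->|qp]; first by rewrite bnum_base.
  case: ifPn => [/eqP lam0|lam_neq0].
    by have [-> ->] := bnum_cnum_noncollinear lam0.
  by have [-> ->] := bnum_cnum_collinear qp lam_neq0.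
case: ifPn => pbl; first by have [-> ->] := bnum_cnum_flag pbl.
by have [-> ->] := bnum_cnum_nonflag pbl.
Qed.

Lemma incidence_graph_connected : connected_graph adj.
Proof.
have near_point p w : w \in ball adj (inl p) 4.
  by rewrite ball_point_dist inE point_dist_le4.
case=> [p|bl] w; first by exists 4.
have [p pbl] := exists_point_on bl.
exists (1 + 4); apply: (ball_trans _ (near_point p w)).
by rewrite /= !inE; apply/orP; right; apply/existsP; exists (inr bl); rewrite inE eqxx.
Qed.

End SPBIBD.

Theorem lemma4p2 (P B : finType) (I : P -> B -> bool)
  (v b r k l1 t : nat) :
  is_SPBIBD I v b r k l1 0 (k - 1) t ->
  0 < t -> t < k ->
  (forall p : P, distance_regularized (inc_adj I) (inl p)) /\
  distance_semiregular (inc_adj I) [set x | if x is inl _ then true else false]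
    [:: r; k - 1; r - l1; k - t; 0]
    [:: 0; 1; l1; t; r].
Proof.
move=> spbibd t_gt0 t_lt_k.
have numbers := intersection_numbers spbibd t_gt0 t_lt_k.
have regular p : distance_regularized (inc_adj I) (inl p).
  by move=> i w w' /numbers[_ -> -> ->] /numbers[_ -> -> ->].
split=> //; split; first exact: incidence_graph_connected spbibd t_gt0 t_lt_k.
  by case=> [p|bl]; rewrite inE.
by case=> [p|bl]; rewrite inE // => _ i w /numbers[].
Qed.
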